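(* For every $x\in[0,1/56]$ there exists a sequence $(\tilde d_i(x))_{i\ge1}$ with each $\tilde d_i(x)\in\{0\}\cup\{1/n:n\ge1\}$ such that $$x=\sum_{i=1}^{\infty}\frac{\tilde d_i(x)}{8^i}.$$ *)

From Stdlib Require Import Reals.
Open Scope R_scope.

Definition admissible_digit (d : R) : Prop :=
  d = 0 \/ exists n : nat, (1 <= n)%nat /\ d = / INR n.

(* If every s in [0, 1/7] lies within 1/56 above an admissible digit,
   then starting from x in [0, 1/56] one repeatedly multiplies the remainder by 8 and
   subtracts such a digit; the remainder stays in [0, 1/56], so the error of the n-th
   partial sum is at most 8^-n / 56.  The digit for s > 0 is 1/n with n the least
   integer above 1/s; s <= 1/7 forces n >= 8. *)

From Stdlib Require Import Reals Lra Lia ZArith ClassicalEpsilon.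
Open Scope R_scope.

Lemma bounded_div_pow_cv0 (b c : R) (u : nat -> R) :
  1 < b -> (forall n, 0 <= u n <= c) -> Un_cv (fun n => u n / b ^ n) 0.
Proof.
  intros Hb Hu eps Heps.
  assert (Hc : 0 <= c) by (destruct (Hu O); lra).
  assert (Hinv : Rabs (/ b) < 1).
  { rewrite Rabs_pos_eq by (left; apply Rinv_0_lt_compat; lra).
    rewrite <- Rinv_1; apply Rinv_lt_contravar; lra. }
  destruct (pow_lt_1_zero (/ b) Hinv (eps / (c + 1))) as [N HN].
  { apply Rdiv_lt_0_compat; lra. }
  exists N; intros n Hn; unfold R_dist.
  specialize (HN n Hn); specialize (Hu n).
  assert (Hpos : 0 < (/ b) ^ n) by (apply pow_lt, Rinv_0_lt_compat; lra).
  rewrite Rabs_pos_eq in HN by lra.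
  rewrite Rminus_0_r, Rdiv_def, <- pow_inv, Rabs_pos_eq by nra.
  assert (Hlt : (c + 1) * (/ b) ^ n < eps).
  { apply Rmult_lt_reg_l with (/ (c + 1)); [apply Rinv_0_lt_compat; lra|].
    rewrite <- Rmult_assoc, Rinv_l, Rmult_1_l by lra.
    unfold Rdiv in HN; lra. }
  nra.
Qed.

Section GreedyExpansion.

Variables (b c : R) (digit : R -> Prop).
Hypothesis b_gt1 : 1 < b.
Hypothesis digit_step :
  forall s, 0 <= s <= b * c -> exists d, digit d /\ 0 <= s - d <= c.

Definition greedy_digit (s : R) : R :=
  epsilon (inhabits 0) (fun d => digit d /\ 0 <= s - d <= c).

Lemma greedy_digit_spec (s : R) :
  0 <= s <= b * c -> digit (greedy_digit s) /\ 0 <= s - greedy_digit s <= c.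
Proof. intros Hs; exact (epsilon_spec _ _ (digit_step s Hs)). Qed.

Fixpoint greedy_remainder (x : R) (k : nat) : R :=
  match k with
  | O => x
  | S k => b * greedy_remainder x k - greedy_digit (b * greedy_remainder x k)
  end.

Lemma greedy_remainder_bounds (x : R) (k : nat) :
  0 <= x <= c -> 0 <= greedy_remainder x k <= c.
Proof.
  intros Hx; induction k as [|k IH]; simpl; [exact Hx|].
  apply greedy_digit_spec; nra.
Qed.

(* The digit of index [S k] is read off the remainder after [k] steps; index [0] is unused. *)
Definition greedy_expansion (x : R) (i : nat) : R :=
  greedy_digit (b * greedy_remainder x (pred i)).

Lemma greedy_partial_sum (x : R) (n : nat) :
  sum_f_R0 (fun k => greedy_expansion x (S k) / b ^ S k) n
  = x - greedy_remainder x (S n) / b ^ S n.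
Proof.
  assert (Hpow : forall m, b ^ m <> 0) by (intros m; apply pow_nonzero; lra).
  induction n as [|n IH].
  - unfold greedy_expansion; simpl; field; lra.
  - rewrite tech5, IH; unfold greedy_expansion; simpl pred.
    change (b ^ S (S n)) with (b * b ^ S n).
    change (greedy_remainder x (S (S n)))
      with (b * greedy_remainder x (S n) - greedy_digit (b * greedy_remainder x (S n))).
    field; split; [apply Hpow | lra].
Qed.

Lemma greedy_expansion_digits (x : R) (i : nat) :
  0 <= x <= c -> digit (greedy_expansion x i).
Proof.
  intros Hx; apply greedy_digit_spec.
  pose proof (greedy_remainder_bounds x (pred i) Hx); nra.
Qed.

Lemma greedy_expansion_sum (x : R) :
  0 <= x <= c -> infinite_sum (fun k => greedy_expansion x (S k) / b ^ S k) x.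
Proof.
  intros Hx eps Heps.
  destruct (bounded_div_pow_cv0 b c (greedy_remainder x) b_gt1
              (fun n => greedy_remainder_bounds x n Hx) eps Heps) as [N HN].
  exists N; intros n Hn; specialize (HN (S n) ltac:(lia)).
  unfold R_dist in *; rewrite greedy_partial_sum.
  replace (x - greedy_remainder x (S n) / b ^ S n - x)
    with (- (greedy_remainder x (S n) / b ^ S n - 0)) by ring.
  rewrite Rabs_Ropp; exact HN.
Qed.

End GreedyExpansion.

Lemma exists_nat_above_inv (s : R) :
  0 < s -> exists n : nat, / s < INR n <= / s + 1.
Proof.
  intros Hs; destruct (archimed (/ s)) as [Hup Hup1].
  assert (Hpos : (0 <= up (/ s))%Z).
  { apply le_IZR; pose proof (Rinv_0_lt_compat s Hs); lra. }
  exists (Z.to_nat (up (/ s))).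
  rewrite INR_IZR_INZ, Z2Nat.id by exact Hpos; lra.
Qed.

Lemma admissible_digit_step (s : R) :
  0 <= s <= 1 / 7 -> exists d, admissible_digit d /\ 0 <= s - d <= 1 / 56.
Proof.
  intros Hs; destruct (Req_dec s 0) as [->|Hs0].
  { exists 0; split; [left; reflexivity | lra]. }
  destruct (exists_nat_above_inv s) as [n [Hlow Hhigh]]; [lra|].
  assert (H7 : 7 <= / s).
  { apply Rmult_le_reg_r with s; [lra|]; rewrite Rinv_l by lra; lra. }
  assert (Hn8 : (8 <= n)%nat) by (apply INR_lt with (n := 7%nat); simpl; lra).
  assert (Hn : 8 <= INR n) by (apply le_INR in Hn8; simpl in Hn8; lra).
  exists (/ INR n); split.
  - right; exists n; split; [lia | reflexivity].
  - (* [1/s < n <= 1/s + 1] gives [1 < s n <= 1 + s], so [0 < s - 1/n <= s/n <= 1/56]. *)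
    assert (Hsn : 1 < s * INR n <= 1 + s).
    { split.
      - apply Rmult_lt_reg_l with (/ s); [apply Rinv_0_lt_compat; lra|].
        rewrite <- Rmult_assoc, Rinv_l, Rmult_1_l, Rmult_1_r by lra; lra.
      - apply Rmult_le_reg_l with (/ s); [apply Rinv_0_lt_compat; lra|].
        rewrite <- Rmult_assoc, Rinv_l, Rmult_1_l by lra.
        rewrite Rmult_plus_distr_l, Rmult_1_r, Rinv_l by lra; lra. }
    replace (s - / INR n) with ((s * INR n - 1) / INR n) by (field; lra).
    split.
    + unfold Rdiv; apply Rmult_le_pos; [lra | left; apply Rinv_0_lt_compat; lra].
    + apply Rmult_le_reg_r with (INR n); [lra|].
      unfold Rdiv; rewrite Rmult_assoc, Rinv_l by lra; nra.
Qed.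

Theorem lemma2p4 :
  forall x : R, 0 <= x <= 1 / 56 ->
  exists d : nat -> R,
    (forall i : nat, (1 <= i)%nat -> admissible_digit (d i)) /\
    infinite_sum (fun k : nat => d (S k) / 8 ^ (S k)) x.
Proof.
  intros x Hx.
  assert (Hb : 1 < 8) by lra.
  assert (Hstep : forall s, 0 <= s <= 8 * (1 / 56) ->
                  exists d, admissible_digit d /\ 0 <= s - d <= 1 / 56).
  { intros s Hs; apply admissible_digit_step; lra. }
  exists (greedy_expansion 8 (1 / 56) admissible_digit x); split.
  - intros i _; exact (greedy_expansion_digits _ _ _ Hb Hstep x i Hx).
  - exact (greedy_expansion_sum _ _ _ Hb Hstep x Hx).
Qed.
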